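(* Let $(G,\mathcal{P})$ be a group pair and let $S$ be a finite generating set of $G$. Then $(G,\mathcal{P})$ is relatively finitely presented if and only if the coned-off Cayley graph $\hat\Gamma(G,\mathcal{P},S)$ is coarsely unicone simply-connected.
   Context: A group pair $(G,\mathcal{P})$: $G$ finitely generated, $\mathcal{P}$ a non-empty finite collection of subgroups (repetitions allowed); $G/\mathcal{P}=\coprod_{P\in\mathcal{P}}G/P$. For $S'\subseteq G$ let $\varphi\colon F(S')*\mathop{\ast}_{P\in\mathcal{P}}P\to G$ be induced by inclusions; $(G,\mathcal{P})$ is relatively finitely presented if there exist finite $S'$ with $\varphi$ surjective and a finite subset $R$ of the free product normally generating $\ker\varphi$. The coned-off Cayley graph $\hat\Gamma(G,\mathcal{P},S)$ has vertex set $G\sqcup G/\mathcal{P}$, edges $\{g,g'\}$ for $g^{-1}g'\in S$, and edges $\{g,A\}$ for $g\in G$, $A\in G/\mathcal{P}$ with $g\in A$. Vertices in $G/\mathcal{P}$ are cone vertices. An edge loop of length $l$ is a sequence of vertices $v_1,\dots,v_l$ with $\{v_i,v_{i+1}\}$ and $\{v_l,v_1\}$ edges; it is unicone if it contains at most one cone vertex. $\hat\Gamma_l$ is the 2-complex obtained from $\hat\Gamma(G,\mathcal{P},S)$ by attaching a 2-cell along each unicone loop of length $<l$. The graph is coarsely unicone simply-connected if $\hat\Gamma_l$ is simply-connected for some $l\in\mathbb{N}$. *)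

From Stdlib Require Import List Relations Arith.
Import ListNotations.

Set Implicit Arguments.

Record group := Group {
  carrier :> Type;
  gmul : carrier -> carrier -> carrier;
  gone : carrier;
  ginv : carrier -> carrier;
  gmulA : forall x y z, gmul x (gmul y z) = gmul (gmul x y) z;
  gmul1g : forall x, gmul gone x = x;
  gmulVg : forall x, gmul (ginv x) x = gone }.
Arguments gmul {g}.
Arguments gone {g}.
Arguments ginv {g}.

Section Defs.
Variable G : group.

Definition subgroup (H : G -> Prop) : Prop :=
  H gone /\ (forall x y, H x -> H y -> H (gmul x y)) /\ (forall x, H x -> H (ginv x)).

Definition gprod (l : list G) : G := fold_right gmul gone l.

Definition generates (S : list G) : Prop :=
  forall g : G, exists w : list (G * bool),
    Forall (fun a : G * bool => In (fst a) S) w /\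
    gprod (map (fun a : G * bool => if snd a then fst a else ginv (fst a)) w) = g.

Definition fin_generated : Prop := exists S : list G, generates S.

(** A group pair: G finitely generated, P a non-empty finite list (repetitions
    allowed) of subgroups; the i-th subgroup is [Pi Ps i]. *)
Definition Pi (Ps : list (G -> Prop)) (i : nat) : G -> Prop := nth i Ps (fun _ => False).

Definition group_pair (Ps : list (G -> Prop)) : Prop :=
  fin_generated /\ Ps <> [] /\ Forall subgroup Ps.

(** Letters of the free product F(S') * ( *_{i} P_i ): a generator s of S' with
    an exponent sign, or an element p of the i-th factor P_i. *)
Inductive letter := Gen (s : G) (b : bool) | Par (i : nat) (p : G).

Definition valid_letter (Ps : list (G -> Prop)) (S' : list G) (a : letter) : Prop :=
  match a with
  | Gen s _ => In s S'
  | Par i p => i < length Ps /\ Pi Ps i p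
  end.

Definition valid_word Ps S' (w : list letter) : Prop := Forall (valid_letter Ps S') w.

Definition eval_letter (a : letter) : G :=
  match a with Gen s b => if b then s else ginv s | Par _ p => p end.

Definition phi (w : list letter) : G := gprod (map eval_letter w).

(** Elementary moves: the first three generate the free product
    F(S') * ( *_i P_i ) as words modulo moves; the last inserts a relator,
    so the generated equivalence is equality modulo the normal closure of R. *)
Inductive fp_step (Ps : list (G -> Prop)) (S' : list G) (R : list (list letter))
  : list letter -> list letter -> Prop :=
| fs_free p q s b : In s S' ->
    fp_step Ps S' R (p ++ Gen s b :: Gen s (negb b) :: q) (p ++ q)
| fs_mul p q i x y : i < length Ps -> Pi Ps i x -> Pi Ps i y ->
    fp_step Ps S' R (p ++ Par i x :: Par i y :: q) (p ++ Par i (gmul x y) :: q)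
| fs_one p q i : i < length Ps ->
    fp_step Ps S' R (p ++ Par i gone :: q) (p ++ q)
| fs_rel p q r : In r R -> fp_step Ps S' R (p ++ q) (p ++ r ++ q).

Definition rel_fin_presented (Ps : list (G -> Prop)) : Prop :=
  exists (S' : list G) (R : list (list letter)),
    (forall g : G, exists w, valid_word Ps S' w /\ phi w = g) /\
    Forall (valid_word Ps S') R /\
    Forall (fun r => phi r = gone) R /\
    (forall w, valid_word Ps S' w -> phi w = gone ->
       clos_refl_sym_trans _ (fp_step Ps S' R) w []).

(** Vertices: elements of G, and cone vertices (i, A) with A a left coset of
    the i-th subgroup (A represented as a predicate on G). *)
Inductive vertex := VG (g : G) | VC (i : nat) (A : G -> Prop).

Definition is_coset (Ps : list (G -> Prop)) (i : nat) (A : G -> Prop) : Prop :=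
  i < length Ps /\ exists g : G, forall x, A x <-> Pi Ps i (gmul (ginv g) x).

Definition is_vertex Ps (v : vertex) : Prop :=
  match v with VG _ => True | VC i A => is_coset Ps i A end.

Definition is_cone (v : vertex) : Prop :=
  match v with VG _ => False | VC _ _ => True end.

Definition adj Ps (S : list G) (v w : vertex) : Prop :=
  match v, w with
  | VG g, VG g' => g <> g' /\ (In (gmul (ginv g) g') S \/ In (gmul (ginv g') g) S)
  | VG g, VC i A => is_coset Ps i A /\ A g
  | VC i A, VG g => is_coset Ps i A /\ A g
  | VC _ _, VC _ _ => False
  end.

Fixpoint walk Ps S (x : vertex) (p : list vertex) : Prop :=
  match p with
  | [] => True
  | y :: p' => adj Ps S x y /\ is_vertex Ps y /\ walk Ps S y p'
  end.

Definition edge_loop Ps S (c : list vertex) : Prop :=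
  match c with
  | [] => False
  | x :: p => is_vertex Ps x /\ walk Ps S x p /\ adj Ps S (last c x) x
  end.

Definition unicone (c : list vertex) : Prop :=
  forall v w, In v c -> In w c -> is_cone v -> is_cone w -> v = w.

(** boundaries of the 2-cells of \hat\Gamma_l *)
Definition cell_loop Ps S (l : nat) (c : list vertex) : Prop :=
  edge_loop Ps S c /\ unicone c /\ length c < l.

(** Combinatorial homotopy of edge paths in the 2-complex \hat\Gamma_l:
    insertion/deletion of a backtrack, and insertion/deletion of the
    boundary of a 2-cell (read from any of its vertices, in either direction;
    the set of cell loops is closed under rotation and reversal). *)
Inductive htp_step Ps S (l : nat) : list vertex -> list vertex -> Prop :=
| hs_back p q u v : is_vertex Ps u -> is_vertex Ps v -> adj Ps S u v ->
    htp_step Ps S l (p ++ u :: v :: u :: q) (p ++ u :: q)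
| hs_cell p q x r : cell_loop Ps S l (x :: r) ->
    htp_step Ps S l (p ++ x :: r ++ x :: q) (p ++ x :: q).

Definition homotopic Ps S l : list vertex -> list vertex -> Prop :=
  clos_refl_sym_trans _ (htp_step Ps S l).

Definition simply_connected_l Ps S (l : nat) : Prop :=
  (exists v, is_vertex Ps v) /\
  (forall v w, is_vertex Ps v -> is_vertex Ps w ->
     exists p, walk Ps S v p /\ last (v :: p) v = w) /\
  (forall x p, is_vertex Ps x -> walk Ps S x p -> last (x :: p) x = x ->
     homotopic Ps S l (x :: p) [x]).

Definition coarsely_unicone_simply_connected Ps S : Prop :=
  exists l : nat, simply_connected_l Ps S l.

End Defs.

(* Both directions rest on a dictionary between edge paths of the coned-off Cayley graph and
   words of the free product F * ( *_i P_i ): a word traces a path from any base vertex (a letter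
   of P_i passes through the cone vertex of the current coset), and a path is read back as a word.

   If \hat\Gamma_l is simply connected, take S' = S and as relators the S-words of length at most
   l + 2 that are trivial in G, together with the words w p^-1 where w is an S-word of length at
   most l whose value p lies in some P_i. Reading paths as words turns backtracks into trivial
   words and the boundary of a unicone 2-cell into a product of cyclic rotations of relators; a
   word in the kernel traces a closed path, which is null-homotopic, so the word is a consequence
   of the relators.

   Conversely, fix S-words spelling the elements of S' and words of the free product spelling the
   elements of S. Once l exceeds the lengths of the loops spelled by free cancellations, by the
   relators and by the edges of the graph, each elementary move of the presentation changes a
   traced path by a homotopy in \hat\Gamma_l, and each closed edge path is homotopic to the trace
   of a word in the kernel of phi, hence to a constant path. *)

From Stdlib Require Import List Relations Arith Lia.
From Stdlib Require Import ClassicalEpsilon ClassicalDescription.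
From Stdlib Require Import FunctionalExtensionality PropExtensionality.
Import ListNotations.
Set Implicit Arguments.

Local Notation dec := excluded_middle_informative.

Arguments gmulA {g} x y z.
Arguments gmul1g {g} x.
Arguments gmulVg {g} x.

Section GroupFacts.
Context {G : group}.
Implicit Types x y z : G.

Lemma gmulgV x : gmul x (ginv x) = gone.
Proof.
  rewrite <- (gmul1g (gmul x (ginv x))), <- (gmulVg (ginv x)) at 1.
  rewrite <- gmulA, (gmulA (ginv x) x), gmulVg, gmul1g, gmulVg. reflexivity.
Qed.

Lemma gmulg1 x : gmul x gone = x.
Proof. rewrite <- (gmulVg x), gmulA, gmulgV, gmul1g. reflexivity. Qed.

Lemma gmulKg x y : gmul (ginv x) (gmul x y) = y.
Proof. rewrite gmulA, gmulVg, gmul1g. reflexivity. Qed.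

Lemma gmulKVg x y : gmul x (gmul (ginv x) y) = y.
Proof. rewrite gmulA, gmulgV, gmul1g. reflexivity. Qed.

Lemma gmulI x y z : gmul x y = gmul x z -> y = z.
Proof. intro E. rewrite <- (gmulKg x y), E, gmulKg. reflexivity. Qed.

Lemma ginvK x : ginv (ginv x) = x.
Proof. apply (gmulI (ginv x)). rewrite gmulgV, gmulVg. reflexivity. Qed.

Lemma ginvM x y : ginv (gmul x y) = gmul (ginv y) (ginv x).
Proof.
  apply (gmulI (gmul x y)).
  rewrite gmulgV, <- gmulA, (gmulA y), gmulgV, gmul1g, gmulgV. reflexivity.
Qed.

Lemma ginv1 : ginv (@gone G) = gone.
Proof. rewrite <- (gmulg1 (ginv gone)), gmulVg. reflexivity. Qed.

Lemma gprod_app (u v : list G) : gprod G (u ++ v) = gmul (gprod G u) (gprod G v).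
Proof.
  induction u as [|x u IH]; simpl.
  - rewrite gmul1g. reflexivity.
  - rewrite IH, gmulA. reflexivity.
Qed.

Lemma subgroup1 (H : G -> Prop) : subgroup G H -> H gone.
Proof. intros [H1 _]. exact H1. Qed.

Lemma subgroupM {H : G -> Prop} {x y} : subgroup G H -> H x -> H y -> H (gmul x y).
Proof. intros [_ [HM _]]. auto. Qed.

Lemma subgroupV {H : G -> Prop} {x} : subgroup G H -> H x -> H (ginv x).
Proof. intros [_ [_ HV]]. auto. Qed.

Lemma subgroup_coset {H : G -> Prop} g {x y} : subgroup G H ->
  H (gmul (ginv g) x) -> H (gmul (ginv g) y) -> H (gmul (ginv x) y).
Proof.
  intros sH Hx Hy. pose proof (subgroupM sH (subgroupV sH Hx) Hy) as K.
  rewrite ginvM, ginvK, <- gmulA, gmulKVg in K. exact K.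
Qed.

Lemma phi_app (u v : list (letter G)) : phi (u ++ v) = gmul (phi u) (phi v).
Proof. unfold phi. rewrite map_app, gprod_app. reflexivity. Qed.

Lemma phi_nil : phi (@nil (letter G)) = gone.
Proof. reflexivity. Qed.

Lemma phi_cons (a : letter G) (w : list (letter G)) : phi (a :: w) = gmul (eval_letter a) (phi w).
Proof. reflexivity. Qed.

Lemma phi_single (a : letter G) : phi [a] = eval_letter a.
Proof. apply gmulg1. Qed.

End GroupFacts.

Section Lists.
Variable A : Type.
Implicit Types (x y : A) (X Y : list A).

Lemma last_indep x X d d' : last (x :: X) d = last (x :: X) d'.
Proof. revert x. induction X as [|y X IH]; intro x; [reflexivity|exact (IH y)]. Qed.

Lemma last_cons_cons x y X d : last (x :: y :: X) d = last (y :: X) y.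
Proof. exact (last_indep y X d y). Qed.

Lemma last_app_cons X x Y d : last (X ++ x :: Y) d = last (x :: Y) x.
Proof.
  induction X as [|y X IH]; [apply last_indep|].
  rewrite <- app_comm_cons, <- IH. destruct X; reflexivity.
Qed.

Lemma cons_app_last x X Y : x :: X ++ Y = removelast (x :: X) ++ last (x :: X) x :: Y.
Proof.
  rewrite app_comm_cons, (app_removelast_last x (l := x :: X)) at 1 by discriminate.
  rewrite <- app_assoc. reflexivity.
Qed.

Lemma last_cons_app x X Y d : last (x :: X ++ Y) d = last (last (x :: X) x :: Y) (last (x :: X) x).
Proof. rewrite cons_app_last, last_app_cons. reflexivity. Qed.

Lemma cons_snoc_last x X : x :: X = removelast (x :: X) ++ [last (x :: X) x].
Proof. rewrite <- cons_app_last, app_nil_r. reflexivity. Qed.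

Lemma In_last x X : In (last (x :: X) x) (x :: X).
Proof.
  revert x. induction X as [|y X IH]; intro x; [left; reflexivity|].
  rewrite last_cons_cons. right. apply IH.
Qed.

End Lists.

Ltac norm_app := repeat progress (repeat rewrite <- app_assoc; cbn [app]).
Ltac norm_app_in H := repeat progress (repeat rewrite <- app_assoc in H; cbn [app] in H).

Lemma Pi_subgroup (G : group) (Ps : list (G -> Prop)) i :
  Forall (subgroup G) Ps -> i < length Ps -> subgroup G (Pi G Ps i).
Proof. intros sP Hi. rewrite Forall_forall in sP. apply sP, nth_In, Hi. Qed.

Section FreeProductEquivalence.
Variables (G : group) (Ps : list (G -> Prop)) (S' : list G) (R : list (list (letter G))).

Definition fp_equiv : relation (list (letter G)) := clos_refl_sym_trans _ (fp_step Ps S' R).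

Lemma fp_equiv_ctx u v A B : fp_equiv u v -> fp_equiv (A ++ u ++ B) (A ++ v ++ B).
Proof.
  induction 1 as [u v H| | |]; [|apply rst_refl|apply rst_sym; auto|eapply rst_trans; eauto].
  apply rst_step. destruct H as [p q s b Hs|p q i x y Hi Hx Hy|p q i Hi|p q r Hr].
  - pose proof (fs_free Ps S' R (A ++ p) (q ++ B) s b Hs) as K. norm_app_in K. norm_app. exact K.
  - pose proof (fs_mul Ps S' R (A ++ p) (q ++ B) x y Hi Hx Hy) as K.
    norm_app_in K. norm_app. exact K.
  - pose proof (fs_one Ps S' R (A ++ p) (q ++ B) Hi) as K. norm_app_in K. norm_app. exact K.
  - pose proof (fs_rel Ps S' R (A ++ p) (q ++ B) r Hr) as K. norm_app_in K. norm_app. exact K.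
Qed.

Lemma fp_equiv_app u v u' v' : fp_equiv u v -> fp_equiv u' v' -> fp_equiv (u ++ u') (v ++ v').
Proof.
  intros H H'. apply rst_trans with (v ++ u').
  - exact (fp_equiv_ctx [] u' H).
  - pose proof (fp_equiv_ctx v [] H') as K. rewrite !app_nil_r in K. exact K.
Qed.

Lemma fp_par_mul i x y : i < length Ps -> Pi G Ps i x -> Pi G Ps i y ->
  fp_equiv [Par G i x; Par G i y] [Par G i (gmul x y)].
Proof. intros Hi Hx Hy. apply rst_step. exact (fs_mul Ps S' R [] [] x y Hi Hx Hy). Qed.

Lemma fp_par_one i : i < length Ps -> fp_equiv [Par G i gone] [].
Proof. intro Hi. apply rst_step. exact (fs_one Ps S' R [] [] Hi). Qed.

Lemma fp_relator r : In r R -> fp_equiv r [].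
Proof.
  intro Hr. apply rst_sym, rst_step.
  pose proof (fs_rel Ps S' R [] [] r Hr) as K. simpl in K. rewrite app_nil_r in K. exact K.
Qed.

Definition letter_inv (a : letter G) : letter G :=
  match a with Gen _ s b => Gen G s (negb b) | Par _ i p => Par G i (ginv p) end.

Definition word_inv (w : list (letter G)) : list (letter G) := rev (map letter_inv w).

Lemma phi_word_inv w : phi (word_inv w) = ginv (phi w).
Proof.
  induction w as [|a w IH].
  - symmetry. apply ginv1.
  - unfold word_inv. cbn [map rev]. rewrite phi_app, phi_single. fold (word_inv w).
    rewrite IH, phi_cons, ginvM. f_equal.
    destruct a as [s [|]|i p]; simpl; rewrite ?ginvK; reflexivity.
Qed.

Hypothesis sP : Forall (subgroup G) Ps.

Lemma letter_invK a : letter_inv (letter_inv a) = a.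
Proof. destruct a as [s b|i p]; simpl; rewrite ?Bool.negb_involutive, ?ginvK; reflexivity. Qed.

Lemma valid_letter_inv a : valid_letter Ps S' a -> valid_letter Ps S' (letter_inv a).
Proof.
  destruct a as [s b|i p]; simpl; [tauto|]. intros [Hi Hp].
  split; [exact Hi|exact (subgroupV (Pi_subgroup sP Hi) Hp)].
Qed.

Lemma fp_letter_inv_r a : valid_letter Ps S' a -> fp_equiv [a; letter_inv a] [].
Proof.
  destruct a as [s b|i p]; simpl.
  - intro Hs. apply rst_step. exact (fs_free Ps S' R [] [] s b Hs).
  - intros [Hi Hp]. pose proof (Pi_subgroup sP Hi) as sH.
    eapply rst_trans; [apply fp_par_mul; auto; apply (subgroupV sH Hp)|].
    rewrite gmulgV. apply fp_par_one, Hi.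
Qed.

Lemma fp_letter_inv_l a : valid_letter Ps S' a -> fp_equiv [letter_inv a; a] [].
Proof.
  intro Ha. rewrite <- (letter_invK a) at 2. apply fp_letter_inv_r, valid_letter_inv, Ha.
Qed.

Lemma fp_word_inv_l w : valid_word Ps S' w -> fp_equiv (word_inv w ++ w) [].
Proof.
  induction 1 as [|a w Ha Hw IH]; [apply rst_refl|].
  unfold word_inv. cbn [map rev]. fold (word_inv w).
  replace ((word_inv w ++ [letter_inv a]) ++ a :: w)
    with (word_inv w ++ [letter_inv a; a] ++ w) by (rewrite <- app_assoc; reflexivity).
  eapply rst_trans; [apply (fp_equiv_ctx (word_inv w) w (fp_letter_inv_l a Ha))|exact IH].
Qed.

Lemma fp_word_inv_r w : valid_word Ps S' w -> fp_equiv (w ++ word_inv w) [].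
Proof.
  induction 1 as [|a w Ha Hw IH]; [apply rst_refl|].
  unfold word_inv. cbn [map rev]. fold (word_inv w).
  replace ((a :: w) ++ word_inv w ++ [letter_inv a])
    with ([a] ++ (w ++ word_inv w) ++ [letter_inv a]) by (rewrite <- !app_assoc; reflexivity).
  eapply rst_trans; [apply (fp_equiv_ctx [a] [letter_inv a] IH)|apply fp_letter_inv_r, Ha].
Qed.

Lemma fp_equiv_rotate u v : valid_word Ps S' v -> fp_equiv (u ++ v) [] -> fp_equiv (v ++ u) [].
Proof.
  intros Hv H.
  pose proof (fp_equiv_ctx (v ++ u) [] (fp_word_inv_r Hv)) as K. rewrite !app_nil_r in K.
  apply rst_trans with ((v ++ u) ++ v ++ word_inv v); [apply rst_sym, K|].
  replace ((v ++ u) ++ v ++ word_inv v) with (v ++ (u ++ v) ++ word_inv v)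
    by (rewrite <- !app_assoc; reflexivity).
  eapply rst_trans; [apply (fp_equiv_ctx v (word_inv v) H)|apply fp_word_inv_r, Hv].
Qed.

End FreeProductEquivalence.

Section ConedOffGraph.
Variables (G : group) (Ps : list (G -> Prop)) (Sg : list G).

Lemma adj_sym {u v} : adj Ps Sg u v -> adj Ps Sg v u.
Proof. destruct u, v; simpl; intuition. Qed.

Lemma adj_is_vertex {u v} : adj Ps Sg u v -> is_vertex Ps u /\ is_vertex Ps v.
Proof. destruct u, v; simpl; intuition. Qed.

Lemma walk_app x p q :
  walk Ps Sg x (p ++ q) <-> walk Ps Sg x p /\ walk Ps Sg (last (x :: p) x) q.
Proof.
  revert x. induction p as [|y p IH]; intro x; [simpl; tauto|].
  cbn [walk app]. rewrite IH, last_cons_cons. tauto.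
Qed.

Lemma walk_snoc x p y : walk Ps Sg x (p ++ [y]) <-> walk Ps Sg x p /\ adj Ps Sg (last (x :: p) x) y.
Proof.
  rewrite walk_app. simpl. split; [tauto|].
  intros [Hp Hy]. repeat split; auto. apply (adj_is_vertex Hy).
Qed.

Lemma edge_loop_iff x r : edge_loop Ps Sg (x :: r) <-> is_vertex Ps x /\ walk Ps Sg x (r ++ [x]).
Proof. simpl. rewrite walk_snoc. tauto. Qed.

Lemma unicone_incl (c c' : list (vertex G)) : incl c' c -> unicone c -> unicone c'.
Proof. intros Hc U u w Hu Hw. apply U; auto. Qed.

Lemma unicone_noncone x (Q : list (vertex G)) : Forall (fun v => ~ is_cone v) Q -> unicone (x :: Q).
Proof.
  rewrite Forall_forall. intros HQ u w [<-|Hu] [<-|Hw] Cu Cw;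
    [reflexivity|exfalso; exact (HQ w Hw Cw)|exfalso; exact (HQ u Hu Cu)..].
Qed.

Lemma unicone_one_cone (X : list (vertex G)) C Y :
  Forall (fun v => ~ is_cone v) (X ++ Y) -> unicone (X ++ C :: Y).
Proof.
  rewrite Forall_forall. intro HN.
  assert (H : forall v, In v (X ++ C :: Y) -> is_cone v -> v = C).
  { intros v Hv Cv. apply in_app_or in Hv as [Hv|[<-|Hv]]; [|reflexivity|];
      contradiction (HN v); auto using in_or_app. }
  intros u w Hu Hw Cu Cw. rewrite (H u), (H w); auto.
Qed.

Variable l : nat.

Lemma homotopic_ctx u v A B :
  homotopic Ps Sg l u v -> homotopic Ps Sg l (A ++ u ++ B) (A ++ v ++ B).
Proof.
  induction 1 as [u v H| | |]; [|apply rst_refl|apply rst_sym; auto|eapply rst_trans; eauto].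
  apply rst_step. destruct H as [p q u v Hu Hv Ha|p q x r Hc].
  - pose proof (hs_back Ps Sg l (A ++ p) (q ++ B) u v Hu Hv Ha) as K.
    norm_app_in K. norm_app. exact K.
  - pose proof (hs_cell (A ++ p) (q ++ B) Hc) as K. norm_app_in K. norm_app. exact K.
Qed.

Lemma cell_loop_rotate x a v b :
  cell_loop Ps Sg l (x :: a ++ v :: b) -> cell_loop Ps Sg l (v :: b ++ x :: a).
Proof.
  intros [He [Hu Hl]]. apply edge_loop_iff in He as [Hx Hw].
  replace ((a ++ v :: b) ++ [x]) with ((a ++ [v]) ++ (b ++ [x])) in Hw
    by (rewrite <- !app_assoc; reflexivity).
  apply walk_app in Hw as [W1 W2]. rewrite app_comm_cons, last_app_cons in W2.
  split; [|split].
  - apply edge_loop_iff. split.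
    + apply walk_snoc in W1. exact (proj2 (adj_is_vertex (proj2 W1))).
    + replace ((b ++ x :: a) ++ [v]) with ((b ++ [x]) ++ (a ++ [v]))
        by (rewrite <- !app_assoc; reflexivity).
      apply walk_app. rewrite app_comm_cons, last_app_cons. auto.
  - refine (unicone_incl _ Hu). intros w. simpl. rewrite !in_app_iff. simpl. tauto.
  - simpl in Hl |- *. rewrite length_app in Hl |- *. simpl in Hl |- *. lia.
Qed.

Lemma cell_loop_split x r1 r2 : cell_loop Ps Sg l (x :: r1 ++ x :: r2) ->
  cell_loop Ps Sg l (x :: r1) /\ cell_loop Ps Sg l (x :: r2).
Proof.
  intros [He [Hu Hl]]. apply edge_loop_iff in He as [Hx Hw].
  replace ((r1 ++ x :: r2) ++ [x]) with ((r1 ++ [x]) ++ (r2 ++ [x])) in Hw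
    by (rewrite <- !app_assoc; reflexivity).
  apply walk_app in Hw as [W1 W2]. rewrite app_comm_cons, last_app_cons in W2.
  simpl in Hl. rewrite length_app in Hl. simpl in Hl.
  split; (split; [apply edge_loop_iff; auto|split; [|simpl; lia]]);
    refine (unicone_incl _ Hu); intro w; simpl; rewrite in_app_iff; simpl; tauto.
Qed.

Lemma homotopic_app_r x X X' Y :
  homotopic Ps Sg l (x :: X) (x :: X') -> homotopic Ps Sg l (x :: X ++ Y) (x :: X' ++ Y).
Proof. exact (homotopic_ctx [] Y). Qed.

Lemma homotopic_app_l x X Y Y' :
  homotopic Ps Sg l (last (x :: X) x :: Y) (last (x :: X) x :: Y') ->
  homotopic Ps Sg l (x :: X ++ Y) (x :: X ++ Y').
Proof.
  intro H. rewrite !cons_app_last.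
  pose proof (homotopic_ctx (removelast (x :: X)) [] H) as K. rewrite !app_nil_r in K. exact K.
Qed.

Lemma homotopic_backtrack A B u v : adj Ps Sg u v ->
  homotopic Ps Sg l (A ++ u :: v :: u :: B) (A ++ u :: B).
Proof.
  intro Huv. destruct (adj_is_vertex Huv) as [Hu Hv].
  apply rst_step, hs_back; assumption.
Qed.

Lemma homotopic_backtrack_last x Q u v : last (x :: Q) x = u -> adj Ps Sg u v ->
  homotopic Ps Sg l (x :: Q ++ [v; u]) (x :: Q).
Proof.
  intros Hu Huv. pose proof (cons_snoc_last x Q) as E. rewrite Hu in E.
  rewrite cons_app_last, Hu. set (X := removelast (x :: Q)) in *. rewrite E.
  exact (homotopic_backtrack X [] u v Huv).
Qed.

Lemma closed_walk_null x Q : walk Ps Sg x Q -> last (x :: Q) x = x -> unicone (x :: Q) ->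
  length Q < l -> is_vertex Ps x -> homotopic Ps Sg l (x :: Q) [x].
Proof.
  intros Hw Hl Hu Hlen Hx. destruct Q as [|y Q]; [apply rst_refl|].
  pose proof (app_removelast_last x (l := y :: Q) ltac:(discriminate)) as E.
  change (last (y :: Q) x) with (last (x :: y :: Q) x) in E.
  rewrite Hl in E. set (Q' := removelast (y :: Q)) in E. rewrite E in Hw, Hu, Hlen |- *.
  apply rst_step. apply (hs_cell [] []). split; [apply edge_loop_iff; auto|split].
  - refine (unicone_incl _ Hu). intro w. simpl. rewrite in_app_iff. tauto.
  - simpl. rewrite length_app in Hlen. simpl in Hlen. lia.
Qed.

End ConedOffGraph.

Arguments adj_sym {G Ps Sg u v}.
Arguments adj_is_vertex {G Ps Sg u v}.
Arguments homotopic_backtrack {G Ps Sg l} A B {u v}.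
Arguments closed_walk_null {G Ps Sg l x Q}.
Arguments homotopic_app_l {G Ps Sg l} x X {Y Y'}.
Arguments homotopic_backtrack_last {G Ps Sg l x Q u v}.

Section ConeVertices.
Context {G : group}.
Variables (Ps : list (G -> Prop)) (Sg : list G).
Hypothesis sP : Forall (subgroup G) Ps.

Lemma is_coset_subgroup i A : is_coset G Ps i A -> subgroup G (Pi G Ps i).
Proof. intros [Hi _]. exact (Pi_subgroup sP Hi). Qed.

Lemma is_coset_mem {i A a b} : is_coset G Ps i A -> A a -> A b -> Pi G Ps i (gmul (ginv a) b).
Proof.
  intros Hc Ha Hb. pose proof (is_coset_subgroup Hc) as sH. destruct Hc as [_ [g Hg]].
  apply (subgroup_coset g sH); apply Hg; assumption.
Qed.

Definition cone (i : nat) (h : G) : vertex G := VC G i (fun z => Pi G Ps i (gmul (ginv h) z)).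

Lemma cone_is_coset i h : i < length Ps -> is_coset G Ps i (fun z => Pi G Ps i (gmul (ginv h) z)).
Proof. intro Hi. split; [exact Hi|exists h; tauto]. Qed.

Lemma adj_cone i h : i < length Ps -> adj Ps Sg (VG G h) (cone i h).
Proof.
  intro Hi. split; [exact (cone_is_coset h Hi)|].
  rewrite gmulVg. exact (subgroup1 (Pi_subgroup sP Hi)).
Qed.

Lemma adj_cone_mul i h p : i < length Ps -> Pi G Ps i p -> adj Ps Sg (cone i h) (VG G (gmul h p)).
Proof. intros Hi Hp. split; [exact (cone_is_coset h Hi)|]. rewrite gmulKg. exact Hp. Qed.

Lemma cone_eq i A a : is_coset G Ps i A -> A a -> VC G i A = cone i a.
Proof.
  intros Hc Ha. pose proof (is_coset_subgroup Hc) as sH. destruct Hc as [Hi [g Hg]].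
  unfold cone. f_equal. apply functional_extensionality. intro z.
  apply propositional_extensionality. rewrite Hg. apply Hg in Ha. split; intro Hz.
  - exact (subgroup_coset g sH Ha Hz).
  - pose proof (subgroupM sH Ha Hz) as K. rewrite <- gmulA, gmulKVg in K. exact K.
Qed.

Lemma cone_mul i h x : i < length Ps -> Pi G Ps i x -> cone i (gmul h x) = cone i h.
Proof.
  intros Hi Hx. symmetry. apply cone_eq; [apply cone_is_coset, Hi|]. rewrite gmulKg. exact Hx.
Qed.

Lemma walk_cone_passage i h p : i < length Ps -> Pi G Ps i p ->
  walk Ps Sg (VG G h) [cone i h; VG G (gmul h p)].
Proof.
  intros Hi Hp. pose proof (adj_cone h Hi) as H1. pose proof (adj_cone_mul h p Hi Hp) as H2.
  exact (conj H1 (conj (proj2 (adj_is_vertex H1)) (conj H2 (conj I I)))).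
Qed.

End ConeVertices.

Section TracedPaths.
Context {G : group}.
Variables (Ps : list (G -> Prop)) (Sg : list G).

Definition lit (a : G * bool) : G := if snd a then fst a else ginv (fst a).

Definition over_gens (w : list (G * bool)) : Prop := Forall (fun a => In (fst a) Sg) w.

(* The graph has no loops, so a step by the identity does not move. *)
Definition step_path (h x : G) : list (vertex G) :=
  if dec (gmul h x = h) then [] else [VG G (gmul h x)].

Fixpoint gen_path (h : G) (w : list (G * bool)) : list (vertex G) :=
  match w with
  | [] => []
  | a :: w' => step_path h (lit a) ++ gen_path (gmul h (lit a)) w'
  end.

Lemma last_step_path h x d : last (VG G h :: step_path h x) d = VG G (gmul h x).
Proof. unfold step_path. destruct (dec _) as [E|E]; simpl; [rewrite E|]; reflexivity. Qed.

Lemma last_gen_path h w d : last (VG G h :: gen_path h w) d = VG G (gmul h (gprod G (map lit w))).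
Proof.
  revert h d. induction w as [|a w IH]; intros h d; cbn [gen_path map gprod fold_right].
  - rewrite gmulg1. reflexivity.
  - rewrite last_cons_app, last_step_path, IH, gmulA. reflexivity.
Qed.

Lemma gen_path_app h u v :
  gen_path h (u ++ v) = gen_path h u ++ gen_path (gmul h (gprod G (map lit u))) v.
Proof.
  revert h. induction u as [|a u IH]; intro h; simpl.
  - rewrite gmulg1. reflexivity.
  - rewrite IH, app_assoc, gmulA. reflexivity.
Qed.

Lemma adj_step h s b : In s Sg -> gmul h (lit (s, b)) <> h ->
  adj Ps Sg (VG G h) (VG G (gmul h (lit (s, b)))).
Proof.
  intros Hs E. split; [intro E'; apply E; auto|].
  destruct b; cbn [lit fst snd]; [left; rewrite gmulKg; exact Hs|].
  right. rewrite ginvM, ginvK, <- gmulA, gmulVg, gmulg1. exact Hs.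
Qed.

Lemma walk_gen_path h w : over_gens w -> walk Ps Sg (VG G h) (gen_path h w).
Proof.
  intro Hw. revert h. induction Hw as [|[s b] w Hs Hw IH]; intro h; simpl; [exact I|].
  apply walk_app. rewrite last_step_path. split; [|apply IH].
  unfold step_path. destruct (dec _) as [E|E]; simpl; [exact I|].
  split; [apply adj_step; assumption|split; exact I].
Qed.

Lemma gen_path_noncone h w : Forall (fun v => ~ is_cone v) (gen_path h w).
Proof.
  revert h. induction w as [|a w IH]; intro h; simpl; [constructor|].
  apply Forall_app. split; [|apply IH].
  unfold step_path. destruct (dec _); repeat constructor. intros [].
Qed.

Lemma length_gen_path h w : length (gen_path h w) <= length w.
Proof.
  revert h. induction w as [|a w IH]; intro h; simpl; [lia|].
  rewrite length_app. specialize (IH (gmul h (lit a))).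
  unfold step_path. destruct (dec _); simpl; lia.
Qed.

Variable expand : G -> bool -> list (G * bool).

Definition letter_path (h : G) (a : letter G) : list (vertex G) :=
  match a with
  | Gen _ s b => gen_path h (expand s b)
  | Par _ i p => [cone Ps i h; VG G (gmul h p)]
  end.

Fixpoint word_path (h : G) (w : list (letter G)) : list (vertex G) :=
  match w with
  | [] => []
  | a :: w' => letter_path h a ++ word_path (gmul h (eval_letter a)) w'
  end.

Lemma word_path_app h u v : word_path h (u ++ v) = word_path h u ++ word_path (gmul h (phi u)) v.
Proof.
  revert h. induction u as [|a u IH]; intro h; simpl.
  - rewrite phi_nil, gmulg1. reflexivity.
  - rewrite IH, app_assoc, phi_cons, gmulA. reflexivity.
Qed.

Hypothesis expand_val : forall s b, gprod G (map lit (expand s b)) = eval_letter (Gen G s b).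

Lemma last_letter_path h a d : last (VG G h :: letter_path h a) d = VG G (gmul h (eval_letter a)).
Proof.
  destruct a as [s b|i p]; [|reflexivity].
  simpl letter_path. rewrite last_gen_path, expand_val. reflexivity.
Qed.

Lemma last_word_path h w d : last (VG G h :: word_path h w) d = VG G (gmul h (phi w)).
Proof.
  revert h d. induction w as [|a w IH]; intros h d; cbn [word_path].
  - rewrite phi_nil, gmulg1. reflexivity.
  - rewrite last_cons_app, last_letter_path, IH, phi_cons, gmulA. reflexivity.
Qed.

End TracedPaths.

Section SimplyConnectedToPresentation.
Variables (G : group) (Ps : list (G -> Prop)) (Sg : list G) (l : nat).
Hypothesis sP : Forall (subgroup G) Ps.

Definition S_letter (a : letter G) : Prop := exists s b, a = Gen G s b /\ In s Sg.

Definition S_word (w : list (letter G)) : Prop := Forall S_letter w.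

Definition S_alphabet : list (letter G) :=
  map (fun s => Gen G s true) Sg ++ map (fun s => Gen G s false) Sg.

Fixpoint S_words (n : nat) : list (list (letter G)) :=
  match n with
  | 0 => [[]]
  | S m => [] :: flat_map (fun a => map (cons a) (S_words m)) S_alphabet
  end.

Lemma In_S_alphabet a : In a S_alphabet <-> S_letter a.
Proof.
  unfold S_alphabet. rewrite in_app_iff, !in_map_iff. split.
  - intros [[s [<- Hs]]|[s [<- Hs]]]; exists s; eauto.
  - intros [s [[|] [-> Hs]]]; [left|right]; exists s; auto.
Qed.

Lemma In_S_words n w : In w (S_words n) <-> S_word w /\ length w <= n.
Proof.
  revert w. induction n as [|n IH]; intro w; simpl.
  - split; [intros [<-|[]]; split; [constructor|simpl; lia]|].
    intros [_ Hw]. destruct w; [auto|simpl in Hw; lia].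
  - rewrite in_flat_map. split.
    + intros [<-|[a [Ha Hw]]]; [split; [constructor|simpl; lia]|].
      apply in_map_iff in Hw as [w' [<- Hw']]. apply IH in Hw' as [Hw' Hl].
      split; [constructor; [apply In_S_alphabet|]; auto|simpl; lia].
    + intros [Hw Hl]. destruct w as [|a w]; [auto|right].
      inversion Hw as [|? ? Ha Hw']; subst. exists a. split; [apply In_S_alphabet, Ha|].
      apply in_map, IH. simpl in Hl. split; [exact Hw'|lia].
Qed.

Definition cell_relators : list (list (letter G)) :=
  filter (fun w => if dec (phi w = gone) then true else false) (S_words (l + 2)) ++
  flat_map (fun w => flat_map (fun i => if dec (Pi G Ps i (phi w))
                                        then [w ++ [Par G i (ginv (phi w))]] else [])
                              (seq 0 (length Ps)))
           (S_words l).

Lemma In_relators_trivial w : S_word w -> length w <= l + 2 -> phi w = gone -> In w cell_relators.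
Proof.
  intros Hw Hl Hp. apply in_or_app. left. apply filter_In. split; [apply In_S_words; auto|].
  destruct (dec _); [reflexivity|contradiction].
Qed.

Lemma In_relators_parabolic w i : S_word w -> length w <= l -> i < length Ps -> Pi G Ps i (phi w) ->
  In (w ++ [Par G i (ginv (phi w))]) cell_relators.
Proof.
  intros Hw Hl Hi Hp. apply in_or_app. right. apply in_flat_map. exists w.
  split; [apply In_S_words; auto|]. apply in_flat_map. exists i.
  split; [apply in_seq; lia|]. destruct (dec _); [left; reflexivity|contradiction].
Qed.

Lemma In_cell_relators r : In r cell_relators ->
  (S_word r /\ phi r = gone) \/
  exists w i, r = w ++ [Par G i (ginv (phi w))] /\ S_word w /\ i < length Ps /\ Pi G Ps i (phi w).
Proof.
  intro Hr. apply in_app_or in Hr as [Hr|Hr].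
  - apply filter_In in Hr as [Hr Hp]. apply In_S_words in Hr as [Hr _].
    left. destruct (dec _); [auto|discriminate].
  - apply in_flat_map in Hr as [w [Hw Hr]]. apply in_flat_map in Hr as [i [Hi Hr]].
    destruct (dec _) as [Hp|]; [|destruct Hr]. destruct Hr as [<-|[]].
    apply In_S_words in Hw as [Hw _]. apply in_seq in Hi.
    right. exists w, i. repeat split; auto. lia.
Qed.

Lemma S_word_valid w : S_word w -> valid_word Ps Sg w.
Proof. apply Forall_impl. intros a [s [b [-> Hs]]]. exact Hs. Qed.

Lemma cell_relators_valid : Forall (valid_word Ps Sg) cell_relators.
Proof.
  apply Forall_forall. intros r Hr.
  destruct (In_cell_relators _ Hr) as [[Hw _]|[w [i [-> [Hw [Hi Hp]]]]]]; [apply S_word_valid, Hw|].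
  apply Forall_app. split; [apply S_word_valid, Hw|].
  repeat constructor; [exact Hi|exact (subgroupV (Pi_subgroup sP Hi) Hp)].
Qed.

Lemma cell_relators_trivial : Forall (fun r => phi r = gone) cell_relators.
Proof.
  apply Forall_forall. intros r Hr.
  destruct (In_cell_relators _ Hr) as [[_ Hp]|[w [i [-> _]]]]; [exact Hp|].
  rewrite phi_app, phi_single. apply gmulgV.
Qed.

Local Notation equiv := (fp_equiv Ps Sg cell_relators).

Lemma S_word_inv w : S_word w -> S_word (word_inv w).
Proof.
  intro Hw. apply Forall_rev, Forall_map. refine (Forall_impl _ _ Hw).
  intros a [s [b [-> Hs]]]. exists s, (negb b). auto.
Qed.

Lemma equiv_short_S_words u v : S_word u -> S_word v -> length u + length v <= l + 2 ->
  phi u = phi v -> equiv u v.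
Proof.
  intros Hu Hv Hl Hp.
  assert (Hr : In (u ++ word_inv v) cell_relators).
  { apply In_relators_trivial.
    - apply Forall_app. split; [exact Hu|apply S_word_inv, Hv].
    - unfold word_inv. rewrite length_app, length_rev, length_map. lia.
    - rewrite phi_app, phi_word_inv, Hp, gmulgV. reflexivity. }
  pose proof (fp_equiv_ctx u [] (fp_word_inv_l cell_relators sP (S_word_valid Hv))) as K.
  rewrite !app_nil_r in K. apply rst_trans with (u ++ word_inv v ++ v); [apply rst_sym, K|].
  rewrite app_assoc. exact (fp_equiv_ctx [] v (fp_relator _ _ _ _ Hr)).
Qed.

(* Edges at a cone vertex are read through a fixed representative of its coset, so that the two
   edges of a passage through the cone multiply out to the step taken inside P_i. *)
Definition rep (A : G -> Prop) : G := epsilon (inhabits gone) A.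

Lemma rep_in i A : is_coset G Ps i A -> A (rep A).
Proof.
  intro Hc. apply (epsilon_spec (inhabits gone) A).
  pose proof (is_coset_subgroup sP Hc) as sH. destruct Hc as [_ [g Hg]].
  exists g. apply Hg. rewrite gmulVg. exact (subgroup1 sH).
Qed.

Definition edge_word (u v : vertex G) : list (letter G) :=
  match u, v with
  | VG _ a, VG _ b =>
      if dec (In (gmul (ginv a) b) Sg) then [Gen G (gmul (ginv a) b) true]
      else [Gen G (gmul (ginv b) a) false]
  | VG _ a, VC _ i A => [Par G i (gmul (ginv a) (rep A))]
  | VC _ i A, VG _ b => [Par G i (gmul (ginv (rep A)) b)]
  | VC _ _ _, VC _ _ _ => []
  end.

Fixpoint path_word (L : list (vertex G)) : list (letter G) :=
  match L with
  | x :: ((y :: _) as L') => edge_word x y ++ path_word L'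
  | _ => []
  end.

Lemma path_word_app X x Y : path_word (X ++ x :: Y) = path_word (X ++ [x]) ++ path_word (x :: Y).
Proof.
  induction X as [|a [|a' X] IH]; [reflexivity|simpl; rewrite app_nil_r; reflexivity|].
  change (edge_word a a' ++ path_word ((a' :: X) ++ x :: Y) =
          (edge_word a a' ++ path_word ((a' :: X) ++ [x])) ++ path_word (x :: Y)).
  rewrite IH, app_assoc. reflexivity.
Qed.

Lemma path_word_cons_app x X Y :
  path_word (x :: X ++ Y) = path_word (x :: X) ++ path_word (last (x :: X) x :: Y).
Proof.
  revert x. induction X as [|z X IH]; intro x; [reflexivity|].
  change (edge_word x z ++ path_word (z :: X ++ Y) =
          (edge_word x z ++ path_word (z :: X)) ++ path_word (last (x :: z :: X) x :: Y)).
  rewrite IH, last_cons_cons, app_assoc. reflexivity.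
Qed.

Lemma edge_word_group a b : adj Ps Sg (VG G a) (VG G b) ->
  S_word (edge_word (VG G a) (VG G b)) /\ length (edge_word (VG G a) (VG G b)) = 1 /\
  phi (edge_word (VG G a) (VG G b)) = gmul (ginv a) b.
Proof.
  intros [_ Hab]. simpl. destruct (dec _) as [H|H]; rewrite phi_single; simpl.
  - repeat split; auto. repeat constructor. exists (gmul (ginv a) b), true. auto.
  - repeat split; [|rewrite ginvM, ginvK; reflexivity].
    repeat constructor. exists (gmul (ginv b) a), false. tauto.
Qed.

Lemma edge_word_valid u v : adj Ps Sg u v -> valid_word Ps Sg (edge_word u v).
Proof.
  destruct u as [a|i A], v as [b|j B]; simpl; try contradiction.
  - intro Hab. apply S_word_valid, (edge_word_group Hab).
  - intros [Hc Hb]. repeat constructor; [apply Hc|apply (is_coset_mem sP Hc Hb (rep_in Hc))].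
  - intros [Hc Ha]. repeat constructor; [apply Hc|apply (is_coset_mem sP Hc (rep_in Hc) Ha)].
Qed.

Lemma path_word_valid x L : walk Ps Sg x L -> valid_word Ps Sg (path_word (x :: L)).
Proof.
  revert x. induction L as [|y L IH]; intros x Hw; [constructor|].
  destruct Hw as [Hxy [_ Hw]]. apply Forall_app. split; [apply edge_word_valid, Hxy|apply IH, Hw].
Qed.

Lemma equiv_backtrack u v : adj Ps Sg u v -> equiv (edge_word u v ++ edge_word v u) [].
Proof.
  intro Huv. destruct u as [a|i A], v as [b|j B]; [|simpl in Huv..]; [|..|contradiction].
  1: { destruct (edge_word_group Huv) as [H1 [H2 H3]].
       destruct (edge_word_group (adj_sym Huv)) as [H4 [H5 H6]].
       apply equiv_short_S_words; [apply Forall_app; auto|constructor|..].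
       - rewrite length_app, H2, H5. simpl. lia.
       - rewrite phi_app, H3, H6, <- gmulA, gmulKVg, gmulVg. reflexivity. }
  all: destruct Huv as [Hc Hx]; pose proof (rep_in Hc) as Hr; simpl.
  all: eapply rst_trans; [apply fp_par_mul; [apply Hc|apply (is_coset_mem sP Hc)..]; eauto|].
  all: rewrite <- gmulA, gmulKVg, gmulVg; apply fp_par_one, Hc.
Qed.

Lemma group_path_word a L : Forall (fun v => ~ is_cone v) L -> walk Ps Sg (VG G a) L ->
  S_word (path_word (VG G a :: L)) /\ length (path_word (VG G a :: L)) = length L /\
  forall b, last (VG G a :: L) (VG G a) = VG G b -> phi (path_word (VG G a :: L)) = gmul (ginv a) b.
Proof.
  revert a. induction L as [|[b|i A] L IH]; intros a Hn Hw.
  - split; [constructor|split; [reflexivity|]]. intros b [= ->]. symmetry. apply gmulVg.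
  - inversion Hn as [|? ? _ Hn']; subst. destruct Hw as [Hab [_ Hw]].
    destruct (IH b Hn' Hw) as [K1 [K2 K3]]. destruct (edge_word_group Hab) as [E1 [E2 E3]].
    change (path_word (VG G a :: VG G b :: L))
      with (edge_word (VG G a) (VG G b) ++ path_word (VG G b :: L)).
    split; [apply Forall_app; auto|split; [rewrite length_app, E2, K2; reflexivity|]].
    intros c Hc. rewrite last_cons_cons in Hc.
    rewrite phi_app, E3, (K3 c Hc), <- gmulA, gmulKVg. reflexivity.
  - inversion Hn as [|? ? Hv _]. contradiction Hv. exact I.
Qed.

Lemma equiv_cell_group a r : cell_loop Ps Sg l (VG G a :: r) -> Forall (fun v => ~ is_cone v) r ->
  equiv (path_word (VG G a :: r ++ [VG G a])) [].
Proof.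
  intros [He [_ Hl]] Hn. apply edge_loop_iff in He as [_ Hw].
  assert (Hn' : Forall (fun v => ~ is_cone v) (r ++ [VG G a]))
    by (apply Forall_app; split; [exact Hn|repeat constructor; intros []]).
  destruct (group_path_word _ Hn' Hw) as [K1 [K2 K3]].
  apply fp_relator, In_relators_trivial; [exact K1| |].
  - rewrite K2, length_app. simpl in Hl |- *. lia.
  - rewrite (K3 a); [apply gmulVg|]. rewrite app_comm_cons, last_app_cons. reflexivity.
Qed.

(* Read from its cone vertex, such a cell is a short S-path inside the coset closed up through the
   cone: a cyclic rotation of a relator of the second kind. *)
Lemma equiv_cell_cone_once i A g L : cell_loop Ps Sg l (VC G i A :: VG G g :: L) ->
  Forall (fun v => ~ is_cone v) L -> equiv (path_word (VC G i A :: (VG G g :: L) ++ [VC G i A])) [].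
Proof.
  intros [He [_ Hl]] Hn. apply edge_loop_iff in He as [_ [[Hc Hg] [_ Hw]]].
  apply walk_snoc in Hw as [Hw Hlast].
  destruct (last (VG G g :: L) (VG G g)) as [k|j B] eqn:Hk.
  2:{ pose proof (In_last (VG G g) L) as Hin. rewrite Hk in Hin.
      destruct Hin as [Hin|Hin]; [discriminate|].
      rewrite Forall_forall in Hn. contradiction (Hn _ Hin). exact I. }
  destruct Hlast as [_ HkA].
  destruct (group_path_word _ Hn Hw) as [W1 [W2 W3]]. specialize (W3 k Hk).
  rewrite path_word_cons_app, last_cons_cons, Hk. cbn [path_word]. rewrite app_nil_r.
  change (path_word (VC G i A :: VG G g :: L))
    with (edge_word (VC G i A) (VG G g) ++ path_word (VG G g :: L)).
  set (W := path_word (VG G g :: L)) in *. simpl edge_word.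
  pose proof (rep_in Hc) as Hr.
  rewrite <- app_assoc. apply (fp_equiv_rotate sP).
  { repeat constructor; [apply Hc|apply (is_coset_mem sP Hc Hr Hg)]. }
  rewrite <- app_assoc. simpl.
  eapply rst_trans;
    [apply fp_equiv_app; [apply rst_refl|];
     apply fp_par_mul; [apply Hc|apply (is_coset_mem sP Hc)..]; eauto|].
  rewrite <- gmulA, gmulKVg.
  replace (gmul (ginv k) g) with (ginv (phi W)) by (rewrite W3, ginvM, ginvK; reflexivity).
  apply fp_relator, In_relators_parabolic; [exact W1| | apply Hc|].
  - rewrite W2. simpl in Hl. lia.
  - rewrite W3. exact (is_coset_mem sP Hc Hg HkA).
Qed.

Lemma equiv_cell_cone i A r : cell_loop Ps Sg l (VC G i A :: r) ->
  equiv (path_word (VC G i A :: r ++ [VC G i A])) [].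
Proof.
  remember (length r) as n eqn:Hn. revert r Hn.
  induction n as [n IH] using lt_wf_ind. intros r -> Hc. set (v := VC G i A) in *.
  destruct (dec (In v r)) as [Hin|Hnin].
  - apply in_split in Hin as [r1 [r2 ->]].
    destruct (cell_loop_split _ _ Hc) as [C1 C2].
    replace (v :: (r1 ++ v :: r2) ++ [v]) with ((v :: r1) ++ v :: (r2 ++ [v]))
      by (simpl; rewrite <- app_assoc; reflexivity).
    rewrite path_word_app.
    refine (fp_equiv_app (v := []) (v' := []) _ _); (eapply IH; [|reflexivity|eassumption]);
      rewrite length_app; simpl; lia.
  - assert (Hn : Forall (fun w => ~ is_cone w) r).
    { apply Forall_forall. intros w Hw Cw. apply Hnin.
      destruct Hc as [_ [Hu _]].
      assert (w = v) as <- by (apply Hu; [right; exact Hw|left; reflexivity|exact Cw|exact I]).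
      exact Hw. }
    destruct r as [|[g|j B] L].
    + destruct Hc as [[_ [_ Hvv]] _]. simpl in Hvv. contradiction.
    + inversion Hn. apply equiv_cell_cone_once; assumption.
    + inversion Hn as [|? ? Hv _]. contradiction Hv. exact I.
Qed.

Lemma equiv_cell x r : cell_loop Ps Sg l (x :: r) -> equiv (path_word (x :: r ++ [x])) [].
Proof.
  intro Hc.
  destruct (dec (exists v, In v (x :: r) /\ is_cone v)) as [[[g|i A] [Hin Hv]]|Hno];
    [contradiction Hv| |].
  - destruct Hin as [->|Hin]; [apply equiv_cell_cone, Hc|].
    apply in_split in Hin as [a [b ->]].
    pose proof (cell_loop_rotate _ _ _ Hc) as Hc'.
    replace (x :: (a ++ VC G i A :: b) ++ [x]) with ((x :: a) ++ VC G i A :: (b ++ [x]))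
      by (simpl; rewrite <- app_assoc; reflexivity).
    rewrite path_word_app. apply (fp_equiv_rotate sP).
    + destruct Hc as [He _]. apply edge_loop_iff in He as [_ Hw].
      replace ((a ++ VC G i A :: b) ++ [x]) with ((a ++ [VC G i A]) ++ b ++ [x]) in Hw
        by (rewrite <- !app_assoc; reflexivity).
      apply walk_app in Hw as [Hw _]. apply path_word_valid, Hw.
    + cbn [app]. replace (path_word (VC G i A :: b ++ [x]) ++ path_word (x :: a ++ [VC G i A]))
        with (path_word (VC G i A :: (b ++ x :: a) ++ [VC G i A]))
        by (rewrite <- app_assoc; exact (path_word_app (VC G i A :: b) x (a ++ [VC G i A]))).
      apply equiv_cell_cone, Hc'.
  - assert (Hn : Forall (fun v => ~ is_cone v) (x :: r))
      by (apply Forall_forall; intros v Hv Cv; apply Hno; eauto).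
    inversion Hn as [|? ? Hx Hr]. destruct x as [a|]; [|contradiction Hx; exact I].
    apply equiv_cell_group; assumption.
Qed.

Lemma equiv_htp_step L1 L2 : htp_step Ps Sg l L1 L2 -> equiv (path_word L1) (path_word L2).
Proof.
  destruct 1 as [p q u v Hu Hv Huv|p q x r Hc].
  - rewrite (path_word_app p u (v :: u :: q)), (path_word_app p u q).
    change (path_word (u :: v :: u :: q))
      with (edge_word u v ++ edge_word v u ++ path_word (u :: q)).
    rewrite (app_assoc (edge_word u v)). exact (fp_equiv_ctx _ _ (equiv_backtrack _ _ Huv)).
  - rewrite (path_word_app p x (r ++ x :: q)), (path_word_app p x q), app_comm_cons,
      (path_word_app (x :: r) x q).
    exact (fp_equiv_ctx _ _ (equiv_cell Hc)).
Qed.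

Lemma equiv_homotopic L1 L2 : homotopic Ps Sg l L1 L2 -> equiv (path_word L1) (path_word L2).
Proof.
  induction 1; [apply equiv_htp_step; assumption|apply rst_refl|apply rst_sym; assumption|].
  eapply rst_trans; eassumption.
Qed.

Local Notation single_path := (word_path Ps (fun s b => [(s, b)])).

Lemma single_path_val s b : gprod G (map lit [(s, b)]) = eval_letter (Gen G s b).
Proof. simpl. rewrite gmulg1. reflexivity. Qed.

Lemma walk_single_path h w : valid_word Ps Sg w -> walk Ps Sg (VG G h) (single_path h w).
Proof.
  intro Hw. revert h. induction Hw as [|[s b|i p] w Ha Hw IH]; intro h; [exact I|..];
    cbn [word_path]; apply walk_app; rewrite last_letter_path by exact single_path_val;
    (split; [|apply IH]).
  - apply walk_gen_path. repeat constructor. exact Ha.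
  - destruct Ha as [Hi Hp]. exact (walk_cone_passage Sg sP h p Hi Hp).
Qed.

Lemma equiv_letter_path h a : valid_letter Ps Sg a ->
  equiv [a] (path_word (VG G h :: letter_path Ps (fun s b => [(s, b)]) h a)).
Proof.
  destruct a as [s b|i p]; simpl letter_path.
  - intro Hs. assert (Ha : S_word [Gen G s b]) by (repeat constructor; exists s, b; auto).
    cbn [gen_path]. rewrite app_nil_r. unfold step_path.
    destruct (dec _) as [E|E]; cbn [path_word app].
    + apply equiv_short_S_words; [exact Ha|constructor|simpl; lia|].
      rewrite phi_single, phi_nil. apply (gmulI h). rewrite gmulg1. exact E.
    + rewrite app_nil_r. destruct (edge_word_group (adj_step Ps Sg s b Hs E)) as [E1 [E2 E3]].
      apply equiv_short_S_words; [exact Ha|exact E1|rewrite E2; simpl; lia|].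
      rewrite E3, gmulKg, phi_single. reflexivity.
  - intros [Hi Hp]. cbn [path_word edge_word]. rewrite app_nil_r. apply rst_sym.
    destruct (adj_cone Sg sP h Hi) as [Hc Hh]. destruct (adj_cone_mul Ps Sg h p Hi Hp) as [_ Hhp].
    pose proof (rep_in Hc) as Hr.
    eapply rst_trans; [apply fp_par_mul; [exact Hi|apply (is_coset_mem sP Hc Hh Hr)|
                                           apply (is_coset_mem sP Hc Hr Hhp)]|].
    rewrite <- gmulA, gmulKVg, gmulKg. apply rst_refl.
Qed.

Lemma equiv_single_path h w : valid_word Ps Sg w -> equiv w (path_word (VG G h :: single_path h w)).
Proof.
  intro Hw. revert h. induction Hw as [|a w Ha Hw IH]; intro h; [apply rst_refl|].
  cbn [word_path]. rewrite path_word_cons_app, last_letter_path by exact single_path_val.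
  exact (fp_equiv_app (equiv_letter_path h a Ha) (IH _)).
Qed.

Lemma simply_connected_rel_fin_presented :
  simply_connected_l G Ps Sg l -> generates G Sg -> rel_fin_presented G Ps.
Proof.
  intros [_ [_ Hnull]] Hgen. exists Sg, cell_relators.
  split; [|split; [exact cell_relators_valid|split; [exact cell_relators_trivial|]]].
  - intro g. destruct (Hgen g) as [w [Hw Hg]].
    exists (map (fun a => Gen G (fst a) (snd a)) w). split.
    + apply Forall_map. exact Hw.
    + rewrite <- Hg. unfold phi. rewrite map_map. reflexivity.
  - intros w Hw Hp.
    assert (K : homotopic Ps Sg l (VG G gone :: single_path gone w) [VG G gone]).
    { apply Hnull; [exact I|apply walk_single_path, Hw|].
      rewrite last_word_path by exact single_path_val. rewrite Hp, gmulg1. reflexivity. }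
    exact (rst_trans _ _ _ _ _ (equiv_single_path gone Hw) (equiv_homotopic K)).
Qed.

End SimplyConnectedToPresentation.

Section PresentationToSimplyConnected.
Variables (G : group) (Ps : list (G -> Prop)) (Sg S' : list G).
Variables (R : list (list (letter G))) (l : nat).
Hypothesis sP : Forall (subgroup G) Ps.
Hypothesis Hgen : generates G Sg.
Hypothesis Hsurj : forall g : G, exists w, valid_word Ps S' w /\ phi w = g.

Definition gen_spelling (g : G) : list (G * bool) :=
  proj1_sig (constructive_indefinite_description _ (Hgen g)).

Lemma over_gens_gen_spelling g : over_gens Sg (gen_spelling g).
Proof. exact (proj1 (proj2_sig (constructive_indefinite_description _ (Hgen g)))). Qed.

Lemma gen_spelling_val g : gprod G (map lit (gen_spelling g)) = g.
Proof. exact (proj2 (proj2_sig (constructive_indefinite_description _ (Hgen g)))). Qed.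

Definition fp_spelling (g : G) : list (letter G) :=
  proj1_sig (constructive_indefinite_description _ (Hsurj g)).

Lemma fp_spelling_valid g : valid_word Ps S' (fp_spelling g).
Proof. exact (proj1 (proj2_sig (constructive_indefinite_description _ (Hsurj g)))). Qed.

Lemma fp_spelling_val g : phi (fp_spelling g) = g.
Proof. exact (proj2 (proj2_sig (constructive_indefinite_description _ (Hsurj g)))). Qed.

Local Notation fp_path := (word_path Ps (fun s b => gen_spelling (eval_letter (Gen G s b)))).
Local Notation HT := (homotopic Ps Sg l).

Lemma last_fp_path h w d : last (VG G h :: fp_path h w) d = VG G (gmul h (phi w)).
Proof. apply last_word_path. intros s b. apply gen_spelling_val. Qed.

Definition spell (w : list (letter G)) : list (G * bool) :=
  flat_map (fun a => gen_spelling (eval_letter a)) w.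

(* The + 2 accounts for the two edges through a cone vertex that a letter of P_i traces. *)
Definition spell_bound (w : list (letter G)) : nat :=
  fold_right (fun a n => length (gen_spelling (eval_letter a)) + 2 + n) 0 w.

Lemma spell_val w : gprod G (map lit (spell w)) = phi w.
Proof.
  induction w as [|a w IH]; [reflexivity|].
  simpl. rewrite map_app, gprod_app, IH, gen_spelling_val. reflexivity.
Qed.

Lemma over_gens_spell w : over_gens Sg (spell w).
Proof.
  induction w as [|a w IH]; [constructor|].
  apply Forall_app. split; [apply over_gens_gen_spelling|exact IH].
Qed.

Lemma length_spell w : length (spell w) <= spell_bound w.
Proof. induction w as [|a w IH]; simpl; [lia|]. rewrite length_app. lia. Qed.

Lemma last_gen_spelling_path h g d :
  last (VG G h :: gen_path h (gen_spelling g)) d = VG G (gmul h g).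
Proof. rewrite last_gen_path, gen_spelling_val. reflexivity. Qed.

Lemma closed_gen_path_null h w : gprod G (map lit w) = gone -> length w < l -> over_gens Sg w ->
  HT (VG G h :: gen_path h w) [VG G h].
Proof.
  intros Hw Hl Hs. apply closed_walk_null; [apply walk_gen_path, Hs| |
    apply unicone_noncone, gen_path_noncone|pose proof (length_gen_path h w); lia|exact I].
  rewrite last_gen_path, Hw, gmulg1. reflexivity.
Qed.

Lemma homotopic_cone_detour i h p :
  i < length Ps -> Pi G Ps i p -> length (gen_spelling p) + 2 < l ->
  HT (VG G h :: [cone Ps i h; VG G (gmul h p)]) (VG G h :: gen_path h (gen_spelling p)).
Proof.
  intros Hi Hp Hl. set (C := cone Ps i h).
  pose proof (adj_cone Sg sP h Hi) as HhC. pose proof (adj_cone_mul Ps Sg h p Hi Hp) as HCp.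
  pose proof (last_gen_spelling_path h p (VG G h)) as HQ.
  pose proof (length_gen_path h (gen_spelling p)) as HlQ.
  pose proof (gen_path_noncone h (gen_spelling p)) as HnQ.
  pose proof (walk_gen_path Ps h (over_gens_gen_spelling p)) as HwQ.
  set (Q := gen_path h (gen_spelling p)) in *.
  assert (Hloop : HT (VG G h :: Q ++ [C; VG G h]) [VG G h]).
  { apply closed_walk_null; [| |rewrite app_comm_cons; apply unicone_one_cone| |exact I].
    - apply walk_app. rewrite HQ. split; [exact HwQ|].
      exact (conj (adj_sym HCp) (conj (proj1 (adj_is_vertex HCp)) (conj (adj_sym HhC) (conj I I)))).
    - rewrite last_cons_app, HQ. reflexivity.
    - rewrite <- app_comm_cons. constructor; [intros []|].
      apply Forall_app. split; [exact HnQ|repeat constructor; intros []].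
    - rewrite length_app. simpl. lia. }
  eapply rst_trans; [apply rst_sym, (homotopic_app_r [C; VG G (gmul h p)] Hloop)|].
  replace (VG G h :: (Q ++ [C; VG G h]) ++ [C; VG G (gmul h p)])
    with ((VG G h :: Q) ++ C :: VG G h :: C :: [VG G (gmul h p)])
    by (simpl; rewrite <- !app_assoc; reflexivity).
  eapply rst_trans; [apply (homotopic_backtrack (VG G h :: Q) [VG G (gmul h p)] (adj_sym HhC))|].
  rewrite <- app_comm_cons. exact (homotopic_backtrack_last HQ (adj_sym HCp)).
Qed.

Lemma homotopic_fp_path_spell h w : valid_word Ps S' w -> spell_bound w < l ->
  HT (VG G h :: fp_path h w) (VG G h :: gen_path h (spell w)).
Proof.
  intros Hw. revert h. induction Hw as [|a w Ha Hw IH]; intros h Hl; [apply rst_refl|].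
  cbn [word_path spell flat_map]. fold (spell w). simpl in Hl.
  rewrite gen_path_app, gen_spelling_val.
  apply rst_trans with (VG G h :: gen_path h (gen_spelling (eval_letter a)) ++
                                  fp_path (gmul h (eval_letter a)) w); [apply homotopic_app_r|].
  - destruct a as [s b|i p]; [apply rst_refl|].
    destruct Ha as [Hi Hp]. apply homotopic_cone_detour; [exact Hi|exact Hp|lia].
  - apply homotopic_app_l. rewrite last_gen_spelling_path. apply IH. lia.
Qed.

Lemma homotopic_fp_path_ctx h p X Y q : phi X = phi Y ->
  HT (VG G (gmul h (phi p)) :: fp_path (gmul h (phi p)) X)
     (VG G (gmul h (phi p)) :: fp_path (gmul h (phi p)) Y) ->
  HT (VG G h :: fp_path h (p ++ X ++ q)) (VG G h :: fp_path h (p ++ Y ++ q)).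
Proof.
  intros Hp H. rewrite !word_path_app, Hp.
  apply homotopic_app_l. rewrite last_fp_path. apply homotopic_app_r, H.
Qed.

Hypothesis l_gt2 : 2 < l.

Lemma cone_cell_loop i h x : i < length Ps -> Pi G Ps i x ->
  cell_loop Ps Sg l [cone Ps i h; VG G (gmul h x)].
Proof.
  intros Hi Hx. pose proof (adj_cone_mul Ps Sg h x Hi Hx) as H.
  split; [|split; [|simpl; lia]].
  - apply edge_loop_iff. destruct (adj_is_vertex H) as [HC _].
    exact (conj HC (conj H (conj I (conj (adj_sym H) (conj HC I))))).
  - intros u w [<-|[<-|[]]] [<-|[<-|[]]] Cu Cw; solve [reflexivity|contradiction].
Qed.

Hypothesis l_free :
  forall s, In s S' -> length (gen_spelling s) + length (gen_spelling (ginv s)) < l.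
Hypothesis l_rel : forall r, In r R -> spell_bound r < l.
Hypothesis R_valid : Forall (valid_word Ps S') R.
Hypothesis R_trivial : Forall (fun r => phi r = gone) R.

Lemma phi_free_pair s b : phi [Gen G s b; Gen G s (negb b)] = gone.
Proof. unfold phi. destruct b; simpl; rewrite gmulg1; [apply gmulgV|apply gmulVg]. Qed.

Lemma homotopic_free_pair h s b :
  In s S' -> HT (VG G h :: fp_path h [Gen G s b; Gen G s (negb b)]) [VG G h].
Proof.
  intro Hs. cbn [word_path letter_path]. rewrite app_nil_r.
  pose proof (gen_path_app h (gen_spelling (eval_letter (Gen G s b)))
                             (gen_spelling (eval_letter (Gen G s (negb b))))) as E.
  rewrite gen_spelling_val in E. rewrite <- E.
  apply closed_gen_path_null.
  - rewrite map_app, gprod_app, !gen_spelling_val, <- (phi_free_pair s b), phi_cons, phi_single.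
    reflexivity.
  - rewrite length_app. pose proof (l_free s Hs). destruct b; simpl in *; lia.
  - apply Forall_app. split; apply over_gens_gen_spelling.
Qed.

Lemma homotopic_par_mul h i x y : i < length Ps -> Pi G Ps i x ->
  HT (VG G h :: fp_path h [Par G i x; Par G i y]) (VG G h :: fp_path h [Par G i (gmul x y)]).
Proof.
  intros Hi Hx. cbn [word_path letter_path eval_letter app].
  rewrite (cone_mul sP h x Hi Hx), <- gmulA.
  apply rst_step. exact (hs_cell [VG G h] [VG G (gmul h (gmul x y))] (cone_cell_loop h x Hi Hx)).
Qed.

Lemma homotopic_par_one h i : i < length Ps -> HT (VG G h :: fp_path h [Par G i gone]) [VG G h].
Proof.
  intro Hi. cbn [word_path letter_path eval_letter app]. rewrite gmulg1.
  exact (homotopic_backtrack [] [] (adj_cone Sg sP h Hi)).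
Qed.

Lemma homotopic_relator h r : In r R -> HT (VG G h :: fp_path h r) [VG G h].
Proof.
  intro Hr. rewrite Forall_forall in R_valid, R_trivial.
  eapply rst_trans; [apply homotopic_fp_path_spell; auto|].
  apply closed_gen_path_null; [rewrite spell_val; auto| |apply over_gens_spell].
  pose proof (length_spell r). pose proof (l_rel r Hr). lia.
Qed.

Lemma homotopic_fp_step u v h :
  fp_step Ps S' R u v -> HT (VG G h :: fp_path h u) (VG G h :: fp_path h v).
Proof.
  destruct 1 as [p q s b Hs|p q i x y Hi Hx Hy|p q i Hi|p q r Hr].
  - exact (homotopic_fp_path_ctx h p [_; _] [] q (phi_free_pair s b)
                                  (homotopic_free_pair _ s b Hs)).
  - refine (homotopic_fp_path_ctx h p [_; _] [_] q _ (homotopic_par_mul _ x y Hi Hx)).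
    rewrite phi_cons, !phi_single. reflexivity.
  - exact (homotopic_fp_path_ctx h p [_] [] q (phi_single (Par G i gone)) (homotopic_par_one _ Hi)).
  - exact (homotopic_fp_path_ctx h p [] r q (eq_sym (proj1 (Forall_forall _ _) R_trivial r Hr))
             (rst_sym _ _ _ _ (homotopic_relator _ r Hr))).
Qed.

Lemma homotopic_fp_equiv u v h :
  fp_equiv Ps S' R u v -> HT (VG G h :: fp_path h u) (VG G h :: fp_path h v).
Proof.
  induction 1; [apply homotopic_fp_step; assumption|apply rst_refl|apply rst_sym; assumption|].
  eapply rst_trans; eassumption.
Qed.

Hypothesis l_edge :
  forall d, In d (Sg ++ map ginv Sg) -> S (spell_bound (fp_spelling d)) < l.

Lemma spell_bound_edge a b : adj Ps Sg (VG G a) (VG G b) ->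
  S (spell_bound (fp_spelling (gmul (ginv a) b))) < l.
Proof.
  intros [_ Hab]. apply l_edge, in_or_app. destruct Hab as [Hab|Hab]; [left; exact Hab|right].
  apply in_map_iff. exists (gmul (ginv b) a). split; [|exact Hab].
  rewrite ginvM, ginvK. reflexivity.
Qed.

Lemma homotopic_edge a b : adj Ps Sg (VG G a) (VG G b) ->
  HT [VG G a; VG G b] (VG G a :: fp_path a (fp_spelling (gmul (ginv a) b))).
Proof.
  intro Hab. pose proof (spell_bound_edge Hab) as Hl.
  set (w := fp_spelling (gmul (ginv a) b)) in *.
  eapply rst_trans; [|apply rst_sym, homotopic_fp_path_spell; [apply fp_spelling_valid|lia]].
  assert (HQ : last (VG G a :: gen_path a (spell w)) (VG G a) = VG G b)
    by (rewrite last_gen_path, spell_val; unfold w; rewrite fp_spelling_val, gmulKVg; reflexivity).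
  pose proof (length_gen_path a (spell w)) as HlQ. pose proof (length_spell w).
  pose proof (walk_gen_path Ps a (over_gens_spell w)) as HwQ.
  pose proof (gen_path_noncone a (spell w)) as HnQ.
  set (Q := gen_path a (spell w)) in *.
  assert (Hloop : HT (VG G a :: Q ++ [VG G a]) [VG G a]).
  { apply closed_walk_null; [| |apply unicone_noncone| |exact I].
    - apply walk_snoc. rewrite HQ. split; [exact HwQ|exact (adj_sym Hab)].
    - rewrite last_cons_app. reflexivity.
    - apply Forall_app. split; [exact HnQ|repeat constructor; intros []].
    - rewrite length_app. simpl. lia. }
  eapply rst_trans; [apply rst_sym, (homotopic_app_r [VG G b] Hloop)|].
  replace (VG G a :: (Q ++ [VG G a]) ++ [VG G b]) with (VG G a :: Q ++ [VG G a; VG G b])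
    by (rewrite <- app_assoc; reflexivity).
  exact (homotopic_backtrack_last HQ (adj_sym Hab)).
Qed.

Fixpoint read_word (a : G) (L : list (vertex G)) : list (letter G) :=
  match L with
  | VG _ b :: L' => fp_spelling (gmul (ginv a) b) ++ read_word b L'
  | VC _ i _ :: VG _ b :: L' => Par G i (gmul (ginv a) b) :: read_word b L'
  | _ => []
  end.

Lemma read_word_spec a L e : walk Ps Sg (VG G a) L -> last (VG G a :: L) (VG G a) = VG G e ->
  HT (VG G a :: L) (VG G a :: fp_path a (read_word a L)) /\
  valid_word Ps S' (read_word a L) /\ gmul a (phi (read_word a L)) = e.
Proof.
  remember (length L) as n eqn:Hn. revert a L Hn.
  induction n as [n IH] using lt_wf_ind. intros a L -> Hw Hl.
  destruct L as [|[b|i A] L].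
  - injection Hl as ->. split; [apply rst_refl|split; [constructor|apply gmulg1]].
  - destruct Hw as [Hab [_ Hw]]. rewrite last_cons_cons in Hl.
    destruct (IH (length L) ltac:(simpl; lia) b L eq_refl Hw Hl) as [K1 [K2 K3]].
    cbn [read_word]. rewrite word_path_app, fp_spelling_val, gmulKVg.
    split; [|split; [apply Forall_app; split; [apply fp_spelling_valid|exact K2]|]].
    + change (VG G a :: VG G b :: L) with (VG G a :: [VG G b] ++ L).
      eapply rst_trans; [apply homotopic_app_r, homotopic_edge, Hab|].
      apply homotopic_app_l. rewrite last_fp_path, fp_spelling_val, gmulKVg. exact K1.
    + rewrite phi_app, gmulA, fp_spelling_val, gmulKVg. exact K3.
  - destruct L as [|[b|j B] L]; [discriminate Hl| |destruct Hw as [_ [_ [[] _]]]].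
    destruct Hw as [[Hc Ha] [_ [[_ Hb] [_ Hw]]]]. rewrite !last_cons_cons in Hl.
    destruct (IH (length L) ltac:(simpl; lia) b L eq_refl Hw Hl) as [K1 [K2 K3]].
    cbn [read_word word_path letter_path eval_letter app]. rewrite gmulKVg, <- (cone_eq sP a Hc Ha).
    split; [|split].
    + pose proof (homotopic_ctx [VG G a; VC G i A] [] K1) as K. rewrite !app_nil_r in K. exact K.
    + constructor; [split; [apply Hc|exact (is_coset_mem sP Hc Ha Hb)]|exact K2].
    + rewrite phi_cons, gmulA. cbn [eval_letter]. rewrite gmulKVg. exact K3.
Qed.

Hypothesis Hker : forall w, valid_word Ps S' w -> phi w = gone -> fp_equiv Ps S' R w [].

Lemma closed_group_walk_null g p : walk Ps Sg (VG G g) p -> last (VG G g :: p) (VG G g) = VG G g ->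
  HT (VG G g :: p) [VG G g].
Proof.
  intros Hw Hl. destruct (read_word_spec g p Hw Hl) as [K1 [K2 K3]].
  assert (Hp : phi (read_word g p) = gone) by (apply (gmulI g); rewrite K3, gmulg1; reflexivity).
  exact (rst_trans _ _ _ _ _ K1 (homotopic_fp_equiv g (Hker K2 Hp))).
Qed.

(* A closed path at a cone vertex is conjugate, through its first edge, to a closed path at a
   group vertex. *)
Lemma closed_walk_null_any x p : is_vertex Ps x -> walk Ps Sg x p -> last (x :: p) x = x ->
  HT (x :: p) [x].
Proof.
  intros Hx Hw Hl. destruct x as [g|i A]; [exact (closed_group_walk_null p Hw Hl)|].
  destruct p as [|[c|j B] p]; [apply rst_refl| |destruct Hw as [[] _]].
  set (v := VC G i A) in *. destruct Hw as [Hvc [_ Hw]].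
  rewrite last_cons_cons in Hl.
  assert (Hc : HT (VG G c :: p ++ [VG G c]) [VG G c]).
  { apply closed_group_walk_null; [|rewrite last_cons_app; reflexivity].
    apply walk_snoc. rewrite Hl. split; [exact Hw|exact (adj_sym Hvc)]. }
  apply rst_trans with (v :: VG G c :: p ++ [VG G c; v]).
  - pose proof (cons_snoc_last v (VG G c :: p)) as E. rewrite last_cons_cons, Hl in E.
    rewrite app_comm_cons, cons_app_last, last_cons_cons, Hl, E at 1.
    apply rst_sym, (homotopic_backtrack _ [] Hvc).
  - pose proof (homotopic_ctx [v] [v] Hc) as K. norm_app_in K.
    eapply rst_trans; [exact K|exact (homotopic_backtrack [] [] Hvc)].
Qed.

Lemma walk_between_groups g1 g2 :
  exists p, walk Ps Sg (VG G g1) p /\ last (VG G g1 :: p) (VG G g1) = VG G g2.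
Proof.
  exists (gen_path g1 (gen_spelling (gmul (ginv g1) g2))).
  split; [apply walk_gen_path, over_gens_gen_spelling|].
  rewrite last_gen_spelling_path, gmulKVg. reflexivity.
Qed.

Lemma group_vertex_near v : is_vertex Ps v -> exists g,
  (exists p, walk Ps Sg v p /\ last (v :: p) v = VG G g) /\
  (exists p, walk Ps Sg (VG G g) p /\ last (VG G g :: p) (VG G g) = v).
Proof.
  destruct v as [a|i A]; intro Hv; [exists a; split; exists []; split; simpl; auto|].
  pose proof (is_coset_subgroup sP Hv) as sH. pose proof Hv as [_ [g Hg]].
  assert (Ag : A g) by (apply Hg; rewrite gmulVg; exact (subgroup1 sH)).
  exists g. split; [exists [VG G g]|exists [VC G i A]]; (split; [|reflexivity]).
  - exact (conj (conj Hv Ag) (conj I I)).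
  - exact (conj (conj Hv Ag) (conj Hv I)).
Qed.

Lemma presentation_simply_connected : simply_connected_l G Ps Sg l.
Proof.
  split; [exists (VG G gone); exact I|split; [|exact closed_walk_null_any]].
  intros v w Hv Hw.
  destruct (group_vertex_near v Hv) as [g1 [[p1 [W1 L1]] _]].
  destruct (group_vertex_near w Hw) as [g2 [_ [p2 [W2 L2]]]].
  destruct (walk_between_groups g1 g2) as [q [W3 L3]].
  exists (p1 ++ q ++ p2). split.
  - apply walk_app. rewrite L1. split; [exact W1|]. apply walk_app. rewrite L3. auto.
  - rewrite last_cons_app, L1, last_cons_app, L3. exact L2.
Qed.

End PresentationToSimplyConnected.

Lemma In_le_list_max (A : Type) (f : A -> nat) xs x : In x xs -> f x <= list_max (map f xs).
Proof.
  intro Hx. pose proof (proj1 (list_max_le (map f xs) _) (le_n _)) as H.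
  rewrite Forall_forall in H. apply H, in_map, Hx.
Qed.

Lemma rel_fin_presented_simply_connected (G : group) (Ps : list (G -> Prop)) (Sg : list G) :
  Forall (subgroup G) Ps -> generates G Sg -> rel_fin_presented G Ps ->
  coarsely_unicone_simply_connected G Ps Sg.
Proof.
  intros sP Hgen [S' [R [Hsurj [R_valid [R_trivial Hker]]]]].
  set (f_free := fun s => length (gen_spelling Hgen s) + length (gen_spelling Hgen (ginv s))).
  set (f_edge := fun d => S (spell_bound Hgen (fp_spelling Hsurj d))).
  exists (3 + list_max (map f_free S') + list_max (map (spell_bound Hgen) R) +
          list_max (map f_edge (Sg ++ map ginv Sg))).
  apply (presentation_simply_connected (R := R) sP Hgen Hsurj); auto; [lia|intros x Hx..].
  - pose proof (In_le_list_max f_free _ _ Hx). unfold f_free in *. lia.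
  - pose proof (In_le_list_max (spell_bound Hgen) _ _ Hx). lia.
  - pose proof (In_le_list_max f_edge _ _ Hx). unfold f_edge in *. lia.
Qed.

Theorem proposition4p11 (G : group) (Ps : list (G -> Prop)) (S : list G) :
  group_pair G Ps -> generates G S ->
  (rel_fin_presented G Ps <-> coarsely_unicone_simply_connected G Ps S).
Proof.
  intros [_ [_ sP]] Hgen. split.
  - exact (rel_fin_presented_simply_connected sP Hgen).
  - intros [l Hl]. exact (simply_connected_rel_fin_presented sP Hl Hgen).
Qed.
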